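(* Let $I$ and $J$ be finite sets, let $g\in\mathbb{R}^J$, and for each $i\in I$ let $x^0_i\in\mathbb{R}^J$ and let $u_i:\mathbb{R}^J\to\mathbb{R}\cup\{-\infty\}$ be upper semicontinuous and concave with $u_i(x_i+rg)>u_i(x_i)$ for all $x_i\in\mathrm{dom}\,u_i$ and all $r>0$. Assume moreover that whenever $x\in\mathbb{R}^{I\times J}$ satisfies $u_i^\infty(x_i)\ge 0$ for all $i\in I$ and $\sum_{i\in I}x_i=0$, then $x=0$. Define $D_i(x_i):=\sup\{r\in\mathbb{R}\mid u_i(x^0_i+x_i-rg)\ge u_i(x^0_i)\}$. Then the problem \[ \text{maximize } \sum_{i\in I}D_i(x_i)\ \text{ over } x\in\mathbb{R}^{I\times J}\ \text{ subject to } \sum_{i\in I}x_i=0 \] admits an optimal solution.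
   Context: $\mathrm{dom}\,u_i=\{x\in\mathbb{R}^J\mid u_i(x)>-\infty\}$. The recession function of the upper semicontinuous concave function $u_i$ is $u_i^\infty(x_i):=\inf_{\alpha>0}\frac{u_i(\bar x_i+\alpha x_i)-u_i(\bar x_i)}{\alpha}$ for any $\bar x_i\in\mathrm{dom}\,u_i$ (independent of the choice of $\bar x_i$). $x^0_i$ is agent $i$'s endowment, $g$ the numeraire portfolio, and $D_i$ agent $i$'s indifference-price function; the optimization problem is the (double auction) market clearing problem. *)

(* R^J is 'rV[R]_n (J = 'I_n). *)
From HB Require Import structures.
From mathcomp Require Import all_boot all_order all_algebra.
From mathcomp Require Import all_classical all_reals all_analysis.
Set Implicit Arguments. Unset Strict Implicit. Unset Printing Implicit Defensive.
Import Order.TTheory GRing.Theory Num.Theory.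
Import numFieldNormedType.Exports.
Local Open Scope classical_set_scope.
Local Open Scope ring_scope.
Local Open Scope ereal_scope.

Section Defs.
Context {R : realType} {n : nat}.
Implicit Types (u : 'rV[R]_n -> \bar R).

Definition usc u := lower_semicontinuous (fun x => - u x).

Definition concave_ext u := forall (x y : 'rV[R]_n) (a : R), (0 < a < 1)%R ->
  a%:E * u x + (1 - a)%R%:E * u y <= u (a *: x + (1 - a) *: y)%R.

Definition dom u := [set x | u x > -oo].

Definition recession u (x : 'rV[R]_n) : \bar R :=
  let xb := xget (0 : 'rV[R]_n)%R (dom u) in
  ereal_inf [set (u (xb + a *: x)%R - u xb) * (a^-1)%:E | a in [set a : R | (0 < a)%R]].

Definition indiff_price u (x0 g x : 'rV[R]_n) : \bar R :=
  ereal_sup [set r%:E | r in [set r : R | u x0 <= u (x0 + x - r *: g)%R]].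
End Defs.

From HB Require Import structures.
From mathcomp Require Import all_boot all_order all_algebra.
From mathcomp Require Import all_classical all_reals all_analysis.
From mathcomp Require Import lra.

(* Write A_i for the acceptance set {z | u_i(x0_i + z) >= u_i(x0_i)}.  Since
   D_i(x_i) >= r iff x_i - r g lies in A_i, the clearing problem amounts to
   maximising s over the set F of (z, s) with z_i in A_i, s >= 0 and
   sum_i z_i + s g = 0; an optimum (z, s) yields the optimal allocation that
   gives s g to one agent on top of z.  Upper semicontinuity makes F closed.
   If F were unbounded, normalising an unbounded sequence of F would give a
   unit cluster point (d, s) whose nonnegative multiples stay in F by
   concavity; then d plus s g on one agent is a clearing family of recession
   directions, hence zero, and the strict monotonicity along g forces s = 0,
   a contradiction.  So F is compact and s attains its maximum.  If instead
   some u_i(x0_i) = -oo, then D_i is identically +oo and 0 is optimal. *)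

Import Order.TTheory GRing.Theory Num.Theory.
Import numFieldNormedType.Exports.
Local Open Scope classical_set_scope.
Local Open Scope ring_scope.

Lemma usc_closed_ge {R : realType} {n} {u : 'rV[R]_n -> \bar R} (t : R) :
  usc u -> closed [set x | (t%:E <= u x)%E].
Proof.
move=> /lower_semicontinuousP /(_ (- t)) /open_closedC.
congr closed; apply/seteqP; split => x /=; rewrite EFinN lteN2 leNgt => /negP //.
Qed.

Lemma usc_ge_of_segment {R : realType} {n} {u : 'rV[R]_n -> \bar R}
    (y v : 'rV[R]_n) (c p : R) :
  usc u -> (forall l, 0 < l < 1 -> ((l * c + (1 - l) * p)%:E <= u (y + l *: v)%R)%E) ->
  (p%:E <= u y)%E.
Proof.
move=> husc hseg; rewrite leNgt; apply/negP => hlt.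
have [b uyb bp] : exists2 b : R, (u y < b%:E)%E & b < p.
  move: hlt; case: (u y) => [q| |] //; last by exists (p - 1); rewrite ?ltNyr //; lra.
  by rewrite lte_fin => qp; exists ((q + p) / 2); rewrite ?lte_fin; lra.
have [V Vy HV] := husc y (- b) ltac:(by rewrite EFinN lteN2).
have ray : y + l *: v @[l --> 0^'+] --> y.
  apply: cvg_at_right_filter; rewrite -[X in _ --> X]addr0 -(scale0r v).
  by apply: cvgD; [exact: cvg_cst | apply: cvgZ; [exact: cvg_id | exact: cvg_cst]].
have above_b : \forall l \near 0^'+, b < l * c + (1 - l) * p.
  apply: (cvgr_gt p) bp; apply: cvg_at_right_filter.
  suff : l * c + (1 - l) * p @[l --> 0] --> 0 * c + (1 - 0) * p.
    by rewrite mul0r add0r subr0 mul1r.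
  apply: cvgD; apply: cvgM; try exact: cvg_cst; first exact: cvg_id.
  by apply: cvgB; [exact: cvg_cst | exact: cvg_id].
near (0 : R)^'+ => l.
have /HV : V (y + l *: v) by near: l; exact: ray.
have l01 : 0 < l < 1.
  by apply/andP; split; near: l; [exact: nbhs_right_gt | exact: nbhs_right_lt].
rewrite EFinN lteN2 => /(le_lt_trans (hseg l l01)); rewrite lte_fin ltNge.
by move/negP; apply; apply: ltW; near: l.
Unshelve. all: by end_near. Qed.

Lemma sum_ereal_sup_le {R : realType} {T : eqType} (s : seq T) (S : T -> set R) (c : R) :
  uniq s -> (forall f : T -> R, {in s, forall i, S i (f i)} -> \sum_(i <- s) f i <= c) ->
  (\sum_(i <- s) ereal_sup (EFin @` S i) <= c%:E)%E.
Proof.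
elim: s c => [|a s IH] c; first by move=> _ /(_ (fun=> 0)); rewrite !big_nil lee_fin; apply.
rewrite cons_uniq big_cons => /andP[/negbTE as_ us] hsum.
have [->|/set0P[r0 Sr0]] := eqVneq (S a) set0.
  by rewrite image_set0 ereal_sup0 addNye leNye.
have tail r : S a r -> (\sum_(i <- s) ereal_sup (EFin @` S i) <= (c - r)%:E)%E.
  move=> Sr; apply: IH => // f hf; rewrite lerBrDl.
  have := hsum (fun i => if i == a then r else f i); rewrite big_cons eqxx.
  rewrite (eq_big_seq f) => [|i si]; last by case: eqP si => // ->; rewrite as_.
  apply=> i; rewrite inE; case: eqP => [->|_ /= si] //; exact: hf.
move: (tail r0 Sr0) (tail); case: (\sum_(i <- s) _)%E => [x _| //|_ _]; last first.
  by rewrite addeNy leNye.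
move=> tailx; rewrite -leeBrDr // -EFinB; apply: ge_ereal_sup => _ [r Sr <-].
by have := tailx r Sr; rewrite !lee_fin; lra.
Qed.

Lemma cluster_closed {T : topologicalType} {F : set_system T} {B : set T} {x : T} :
  cluster F x -> closed B -> F B -> B x.
Proof. by rewrite clusterE => Fx /closure_id Bcl FB; rewrite Bcl; exact: Fx. Qed.

Lemma unbounded_asymptotic_direction {R : realType} {k} (F : set 'rV[R]_k) :
  ~ bounded_set F -> exists2 d : 'rV[R]_k, `|d| = 1 &
    forall C, closed C -> (forall w a, F w -> 0 <= a <= 1 -> C (a *: w)) ->
    forall t, 0 <= t -> C (t *: d).
Proof.
move=> unbF.
have /choice[w wF] (N : nat) : exists w, F w /\ N%:R < `|w|.
  apply: contrapT => Nw; apply: unbF; exists N%:R; split => [|M NM z Fz /=].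
    exact: num_real.
  by apply: le_trans (ltW NM); rewrite leNgt; apply/negP => Nz; apply: Nw; exists z.
have w_gt0 N : 0 < `|w N| by apply: le_lt_trans (proj2 (wF N)).
pose v N := `|w N|^-1 *: w N.
have v1 N : `|v N| = 1 by rewrite normrZ normfV normr_id mulVf ?gt_eqF.
pose S := [set z : 'rV[R]_k | `|z| = 1].
have cS : compact S.
  apply: bounded_closed_compact.
    by exists 1; split => [|M M1 z /= ->]; [exact: num_real | exact: ltW].
  by apply: closed_comp (@closed_eq _ 1) => z _; exact: norm_continuous.
have [d [Sd dv]] : S `&` cluster (v @ \oo) !=set0.
  by apply: cS; exists 0%N => // N _; exact: v1.
exists d => // C Ccl Cstar t t0; pose N := Num.Def.archi_bound t.
have Bcl : closed [set z | C (t *: z)].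
  by apply: closed_comp Ccl => z _; exact: (continuousZl_tmp (f := id) cvg_id).
apply: (cluster_closed dv Bcl).
exists N => // M /= NM; rewrite /v scalerA; apply: Cstar; first exact: (proj1 (wF M)).
rewrite divr_ge0 //= ler_pdivrMr // mul1r ltW //.
apply: lt_le_trans (archi_boundP t0) _; apply: ltW; apply: le_lt_trans (proj2 (wF M)).
by rewrite ler_nat.
Qed.

Lemma continuous_sum {R : numFieldType} {T : topologicalType} {V : normedModType R}
    {J : Type} (s : seq J) (f : J -> T -> V) :
  (forall j, continuous (f j)) -> continuous (fun x => \sum_(j <- s) f j x).
Proof.
move=> fc; elim: s => [|a s IH].
  by under eq_fun do rewrite big_nil; exact: cst_continuous.
under eq_fun do rewrite big_cons.
by move=> x; apply: continuousD; [exact: fc | exact: IH].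
Qed.

(* A pair (z, s) in (R^n)^I * R is encoded as a row vector of length
   1 + #|I| * n, so that Heine-Borel and the extreme value theorem for 'rV
   apply to it. *)
Section Encoding.
Context {R : realType} {I : finType} {n : nat}.
Local Notation W := 'rV[R]_(1 + #|I| * n).

Definition surplus (w : W) : R := w 0 (lshift _ 0).

Definition alloc (w : W) (i : I) : 'rV[R]_n :=
  \row_j w 0 (rshift 1 (mxvec_index (enum_rank i) j)).

Definition pack_alloc (z : I -> 'rV[R]_n) (s : R) : W :=
  row_mx s%:M (mxvec (\matrix_(k, j) z (enum_val k) 0 j)).

Lemma alloc_pack z s i : alloc (pack_alloc z s) i = z i.
Proof.
apply/rowP => j; rewrite mxE row_mxEr mxvecE mxE enum_rankK.
by congr (z i _ _); apply: val_inj; case: (0 : 'I_1).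
Qed.

Lemma surplus_pack z s : surplus (pack_alloc z s) = s.
Proof. by rewrite /surplus row_mxEl mxE eqxx mulr1n. Qed.

Lemma allocZ a w i : alloc (a *: w) i = a *: alloc w i.
Proof. by apply/rowP => j; rewrite !mxE. Qed.

Lemma surplusZ a w : surplus (a *: w) = a * surplus w.
Proof. by rewrite /surplus mxE. Qed.

Lemma alloc_surplus_eq0 w : (forall i, alloc w i = 0) -> surplus w = 0 -> w = 0.
Proof.
move=> alloc0 surplus0; apply/rowP => k; rewrite mxE.
case: (splitP k) => [k' /= ek|k'].
  have -> : k = lshift _ 0 by apply: val_inj; rewrite /= ek; case: k' {ek} => [[]].
  exact: surplus0.
case: (mxvec_indexP k') => a j ek.
have := congr1 (fun v : 'rV[R]_n => v 0 j) (alloc0 (enum_val a)).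
by rewrite !mxE enum_valK => <-; congr (w _ _); apply: val_inj.
Qed.

Lemma continuous_alloc i : continuous (fun w : W => alloc w i).
Proof.
move=> w; apply/(cvg_ballP (FF := nbhs_filter w)) => e e0.
by apply/nbhs_ballP; exists e => //= w' [_ ww']; split => // a j; rewrite !mxE; exact: ww'.
Qed.

Lemma continuous_surplus : continuous surplus.
Proof. exact: coord_continuous. Qed.

End Encoding.

Section Agent.
Context {R : realType} {n : nat} {u : 'rV[R]_n -> \bar R} {x0 g : 'rV[R]_n}.

Definition acceptance : set 'rV[R]_n := [set z | (u x0 <= u (x0 + z))%E].

Lemma acceptance0 : acceptance 0.
Proof. by rewrite /acceptance /= addr0. Qed.

Lemma indiff_priceE x :
  indiff_price u x0 g x = ereal_sup (EFin @` [set r | acceptance (x - r *: g)]).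
Proof.
rewrite /indiff_price; congr (ereal_sup (EFin @` _)).
by apply/seteqP; split => r; rewrite /acceptance /= addrA.
Qed.

Lemma indiff_price_ge x r : acceptance (x - r *: g) -> (r%:E <= indiff_price u x0 g x)%E.
Proof. by rewrite indiff_priceE => xr; apply: ereal_sup_ubound; exists r. Qed.

Lemma indiff_price_Ny x : u x0 = -oo%E -> indiff_price u x0 g x = +oo%E.
Proof.
move=> ux0; rewrite indiff_priceE; apply: hasNub_ereal_sup; last first.
  by exists 0; rewrite /acceptance /= ux0 leNye.
by case=> M /(_ (M + 1)); rewrite /acceptance /= ux0 leNye => /(_ isT); lra.
Qed.

Hypothesis concave_u : concave_ext u.

Lemma acceptance_scale z a : acceptance z -> 0 <= a <= 1 -> acceptance (a *: z).
Proof.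
move=> Az /andP[a0 a1].
have [->|a_neq0] := eqVneq a 0; first by rewrite scale0r; exact: acceptance0.
have [->|a_neq1] := eqVneq a 1; first by rewrite scale1r.
have a01 : 0 < a < 1 by rewrite !lt_neqAle eq_sym a_neq0 a_neq1 a0 a1.
rewrite /acceptance /=; have := concave_u (x0 + z) x0 a a01.
rewrite scalerDr scalerBl scale1r addrAC [a *: x0 + _]addrC subrK; apply: le_trans.
have ux0E : u x0 = (a%:E * u x0 + (1 - a)%:E * u x0)%E.
  by rewrite -ge0_muleDl ?lee_fin ?subr_ge0 // -EFinD addrC subrK mul1e.
rewrite {1}ux0E.
by apply: leeD => //; rewrite lee_wpmul2l ?lee_fin.
Qed.

Hypothesis usc_u : usc u.
Hypothesis finite_u : forall x, (u x < +oo)%E.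
Hypothesis g_improves : forall x r, dom u x -> 0 < r -> (u x < u (x + r *: g)%R)%E.
Hypothesis x0_dom : dom u x0.

Let u_finE {x} : dom u x -> u x = (fine (u x))%:E.
Proof. by move=> xdom; rewrite fineK // fin_numE -ltey -ltNye xdom finite_u. Qed.

Lemma acceptance_closed : closed acceptance.
Proof.
rewrite /acceptance (u_finE x0_dom).
apply: (closed_comp (f := fun z => x0 + z)) (usc_closed_ge _ usc_u) => z _.
by apply: (@continuousD _ _ _ (cst x0) id); [exact: cst_continuous | exact: cvg_id].
Qed.

Lemma acceptance_shift z t : acceptance z -> 0 <= t -> acceptance (z + t *: g).
Proof.
rewrite /acceptance /= => Az; rewrite le_eqVlt => /predU1P[<-|t0].
  by rewrite scale0r addr0.
apply: (le_trans Az); rewrite addrA; apply/ltW/g_improves => //.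
exact: lt_le_trans x0_dom Az.
Qed.

Lemma acceptance_Ng t : 0 < t -> ~ acceptance (- (t *: g)).
Proof.
move=> t0 Ag; have := g_improves _ _ (lt_le_trans x0_dom Ag) t0.
by rewrite subrK => /(le_lt_trans Ag); rewrite ltxx.
Qed.

Lemma recession_ge0 d : (forall t, 0 <= t -> acceptance (t *: d)) ->
  (0 <= recession u d)%E.
Proof.
(* The recession function is computed at the point xb chosen by xget, not at
   x0: the ray is transported to xb by writing xb + a d + l (x0 - xb) as a
   convex combination of x0 + (a / l) d and xb, and letting l go to 0. *)
move=> ray; set xb := xget 0 (dom u).
have xb_dom : dom u xb by apply: xgetPex; exists x0.
apply: le_ereal_inf_tmp => _ [a /= a0 <-].
apply: mule_ge0; last by rewrite lee_fin invr_ge0 ltW.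
rewrite (u_finE xb_dom) sube_ge0 ?fin_numE //.
apply: (usc_ge_of_segment _ (x0 - xb) (fine (u x0))) => // l l01.
have l0 : 0 < l by case/andP: l01.
have := concave_u (x0 + (a / l) *: d) xb l l01.
have -> : l *: (x0 + (a / l) *: d) + (1 - l) *: xb = xb + a *: d + l *: (x0 - xb).
  rewrite scalerDr scalerA mulrCA divff ?gt_eqF // mulr1 scalerBl scale1r scalerBr.
  by rewrite addrACA [in RHS]addrACA (addrC xb).
apply: le_trans; rewrite EFinD !EFinM -!u_finE //; apply: leeD => //.
by rewrite lee_wpmul2l ?lee_fin ?(ltW l0) //; apply: ray; rewrite divr_ge0 ?ltW.
Qed.
End Agent.

Arguments acceptance {R n} u x0.

Section Market.
Context {R : realType} {I : finType} {n : nat} {g : 'rV[R]_n}.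
Context {x0 : I -> 'rV[R]_n} {u : I -> 'rV[R]_n -> \bar R}.
Hypothesis finite_u : forall i x, (u i x < +oo)%E.
Hypothesis usc_u : forall i, usc (u i).
Hypothesis concave_u : forall i, concave_ext (u i).
Hypothesis g_improves : forall i x r, dom (u i) x -> 0 < r ->
  (u i x < u i (x + r *: g)%R)%E.
Hypothesis no_arbitrage : forall x : I -> 'rV[R]_n,
  (forall i, (0 <= recession (u i) (x i))%E) -> \sum_i x i = 0 -> forall i, x i = 0.
Hypothesis x0_dom : forall i, dom (u i) (x0 i).
Variable i0 : I.

Local Notation W := 'rV[R]_(1 + #|I| * n).
Local Notation A i := (acceptance (u i) (x0 i)).

Definition market_cone : set W :=
  [set w | 0 <= surplus w /\ \sum_i alloc w i + surplus w *: g = 0].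

Definition feasible : set W := [set w | forall i, A i (alloc w i)] `&` market_cone.

Definition settle (w : W) (i : I) : 'rV[R]_n :=
  alloc w i + (if i == i0 then surplus w *: g else 0).

Lemma sum_settle w : \sum_i settle w i = \sum_i alloc w i + surplus w *: g.
Proof. by rewrite big_split /= -big_mkcond big_pred1_eq. Qed.

Lemma market_cone_closed : closed market_cone.
Proof.
apply: closedI.
  by apply: closed_comp (@closed_ge _ 0) => w _; exact: continuous_surplus.
have closed0 : closed [set 0 : 'rV[R]_n].
  exact/accessible_closed_set1/hausdorff_accessible/norm_hausdorff.
apply: closed_comp closed0 => w _.
apply: (@continuousD _ _ _ (fun w => \sum_i alloc w i) (fun w => surplus w *: g)).
  exact: (continuous_sum _ (fun i w => alloc w i) continuous_alloc).
exact/continuousZr_tmp/continuous_surplus.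
Qed.

Lemma feasible_closed : closed feasible.
Proof.
apply: closedI market_cone_closed.
have -> : [set w | forall i, A i (alloc w i)] = \bigcap_i ((fun w => alloc w i) @^-1` A i).
  by apply/seteqP; split => w Aw i; [move=> _ |]; apply: Aw.
apply: closed_bigI => i _.
apply: closed_comp (acceptance_closed (usc_u i) (finite_u i) (x0_dom i)) => w _.
exact: continuous_alloc.
Qed.

Lemma feasible_bounded : bounded_set feasible.
Proof.
apply: contrapT => /unbounded_asymptotic_direction[d d1 dC].
have Ad i t : 0 <= t -> A i (t *: alloc d i).
  rewrite -allocZ; apply: (dC [set w | A i (alloc w i)]) => [|w a [Aw _] a01].
    apply: closed_comp (acceptance_closed (usc_u i) (finite_u i) (x0_dom i)) => w _.
    exact: continuous_alloc.
  by rewrite /= allocZ; apply: acceptance_scale.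
have [s0 bal] : market_cone d.
  rewrite -[d]scale1r; apply: (dC _ market_cone_closed) => // w a [_ [s0 bal]] /andP[a0 _].
  rewrite /market_cone /= surplusZ mulr_ge0 //; split => //.
  under eq_bigr do rewrite allocZ.
  by rewrite -scaler_sumr -scalerA -scalerDr bal scaler0.
have settle0 : forall i, settle d i = 0.
  apply: no_arbitrage; last by rewrite sum_settle.
  move=> i; apply: (recession_ge0 (concave_u i) (usc_u i) (finite_u i) (x0_dom i)) => t t0.
  rewrite /settle scalerDr; case: eqP => _; last by rewrite scaler0 addr0; exact: Ad i t t0.
  rewrite scalerA; apply: (acceptance_shift (g_improves i) (x0_dom i) _ _ (Ad i t t0)).
  exact: mulr_ge0.
have s_eq0 : surplus d = 0.
  apply/eqP; rewrite eq_le s0 andbT leNgt; apply/negP => s_gt0.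
  apply: (acceptance_Ng (g_improves i0) (x0_dom i0) _ s_gt0).
  have := Ad i0 1 ler01; rewrite scale1r.
  by have /eqP := settle0 i0; rewrite /settle eqxx addr_eq0 => /eqP <-.
have d0 : d = 0.
  apply: alloc_surplus_eq0 => // i.
  by have := settle0 i; rewrite /settle s_eq0 scale0r if_same addr0.
by move: d1; rewrite d0 normr0 => /eqP; rewrite eq_sym oner_eq0.
Qed.

Lemma feasible_max :
  exists2 w, feasible w & forall w', feasible w' -> surplus w' <= surplus w.
Proof.
have F0 : feasible (pack_alloc (fun=> 0) 0).
  split => [i|]; first by rewrite alloc_pack; exact: acceptance0.
  rewrite /market_cone /= surplus_pack scale0r addr0; split => //.
  by rewrite big1 // => i _; rewrite alloc_pack.
have Fcompact := bounded_closed_compact feasible_bounded feasible_closed.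
have [w Fw wmax] := EVT_max_rV (ex_intro _ _ F0) Fcompact
  (continuous_subspaceT continuous_surplus).
by exists w => [|w' Fw']; [rewrite inE in Fw | apply: wmax; rewrite inE].
Qed.

Lemma sum_indiff_price_le w y : feasible w ->
  (forall w', feasible w' -> surplus w' <= surplus w) -> \sum_i y i = 0 ->
  (\sum_i indiff_price (u i) (x0 i) g (y i) <= (surplus w)%:E)%E.
Proof.
move=> [_ [s0 _]] wmax y0; under eq_bigr do rewrite indiff_priceE.
apply: sum_ereal_sup_le => [|f fA]; first exact: index_enum_uniq.
have [sf0|sf_lt0] := leP 0 (\sum_i f i); last exact/ltW/(lt_le_trans sf_lt0).
rewrite -(surplus_pack (fun i => y i - f i *: g) (\sum_i f i)); apply: wmax; split.
  by move=> i; rewrite alloc_pack; apply: fA; exact: mem_index_enum.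
rewrite /market_cone /= surplus_pack; split => //; under eq_bigr do rewrite alloc_pack.
by rewrite sumrB y0 sub0r -scaler_suml addNr.
Qed.

Lemma surplus_le_sum_indiff_price w : feasible w ->
  ((surplus w)%:E <= \sum_i indiff_price (u i) (x0 i) g (settle w i))%E.
Proof.
move=> [Aw _].
have -> : surplus w = \sum_i (if i == i0 then surplus w else 0).
  by rewrite -big_mkcond big_pred1_eq.
rewrite -sumEFin; apply: lee_sum => i _; apply: indiff_price_ge.
by rewrite /settle; case: eqP => _; rewrite ?addrK // scale0r subr0 addr0.
Qed.

Lemma market_optimum : exists x : I -> 'rV[R]_n, \sum_i x i = 0 /\
  forall y : I -> 'rV[R]_n, \sum_i y i = 0 ->
    (\sum_i indiff_price (u i) (x0 i) g (y i) <=
     \sum_i indiff_price (u i) (x0 i) g (x i))%E.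
Proof.
have [w Fw wmax] := feasible_max.
exists (settle w); split; first by rewrite sum_settle; case: Fw => _ [].
move=> y y0; apply: le_trans (surplus_le_sum_indiff_price _ Fw).
exact: sum_indiff_price_le.
Qed.

End Market.

Theorem theorem4p3 (R : realType) (I : finType) (n : nat)
  (g : 'rV[R]_n) (x0 : I -> 'rV[R]_n) (u : I -> 'rV[R]_n -> \bar R) :
  (forall i x, (u i x < +oo)%E) ->
  (forall i, usc (u i)) ->
  (forall i, concave_ext (u i)) ->
  (forall i (xi : 'rV[R]_n) (r : R), dom (u i) xi -> 0 < r ->
     (u i xi < u i (xi + r *: g)%R)%E) ->
  (forall x : I -> 'rV[R]_n, (forall i, (0 <= recession (u i) (x i))%E) ->
     \sum_(i : I) x i = 0 -> forall i, x i = 0) ->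
  exists x : I -> 'rV[R]_n, \sum_(i : I) x i = 0 /\
    forall y : I -> 'rV[R]_n, \sum_(i : I) y i = 0 ->
      (\sum_(i : I) indiff_price (u i) (x0 i) g (y i) <=
       \sum_(i : I) indiff_price (u i) (x0 i) g (x i))%E.
Proof.
move=> finite_u usc_u concave_u g_improves no_arbitrage.
have [x0_dom|] := pselect (forall i, dom (u i) (x0 i)).
  case: (pickP (@predT I)) => [i0 _|I0].
    exact: (market_optimum finite_u usc_u concave_u g_improves no_arbitrage x0_dom i0).
  exists (fun=> 0); split => [|y _]; first by rewrite big1.
  by rewrite !big1 // => i; have := I0 i.
move=> /existsNP[i1 /negP]; rewrite -leNgt leeNy_eq => /eqP ux0.
exists (fun=> 0); split => [|y _]; first by rewrite big1.
have D0_ge0 i : (0 <= indiff_price (u i) (x0 i) g 0)%E.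
  by apply: indiff_price_ge; rewrite scale0r subr0; exact: acceptance0.
rewrite [X in (_ <= X)%E](bigD1 i1) //= indiff_price_Ny // addye ?leey //.
by rewrite gt_eqF // (lt_le_trans _ (sume_ge0 (fun i _ => D0_ge0 i) _)) ?ltNy0.
Qed.
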